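(* Let $A$ be a non-negative $d\times d$ matrix and let $\Pi$ be a permutation matrix such that $\widetilde A=\Pi A\Pi^T$ is block upper triangular, with square diagonal blocks $\widetilde A_{1,1},\dots,\widetilde A_{m,m}$, blocks $\widetilde A_{i,j}$ for $i<j$ above the diagonal, and zero blocks below the diagonal. For each $i=1,\dots,m$, let $\widetilde X^{(i)}$ be a closest stable non-negative matrix to $\widetilde A_{i,i}$. In particular, $\widetilde X^{(i)}=\widetilde A_{i,i}$ if $\rho(\widetilde A_{i,i})\le1$. Let $\widetilde X$ be the block upper triangular matrix with diagonal blocks $\widetilde X^{(i)}$, blocks $\widetilde A_{i,j}$ above the diagonal ($i<j$), and zero blocks below the diagonal. Then $X=\Pi^T\widetilde X\Pi$ is a closest stable non-negative matrix to $A$.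
   Context: $\rho(\cdot)$ denotes spectral radius and $\|\cdot\|$ the Frobenius norm $\|X\|=\sqrt{\sum_{i,j}x_{ij}^2}$. A square matrix $X$ is called stable if $\rho(X)\le 1$. A closest stable non-negative matrix to a square matrix $B$ is a global minimizer of $\|X-B\|$ over all entrywise non-negative $X$ of the same size with $\rho(X)\le 1$. *)

(* Scalars live in an arbitrary numClosedFieldType C
   (e.g. algC, or complex numbers over a real closed field); real numbers are
   the elements x with x \is Num.real, and non-negative entries (0 <= x) are
   automatically real. Eigenvalues are taken in C, so the spectral radius is
   the usual one (max modulus of complex eigenvalues). *)
From HB Require Import structures.
From mathcomp Require Import all_boot all_order all_algebra all_fingroup.
Set Implicit Arguments. Unset Strict Implicit. Unset Printing Implicit Defensive.
Import Order.TTheory GRing.Theory Num.Theory.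
Local Open Scope ring_scope.

Section Defs.
Variable C : numClosedFieldType.

Definition nonneg_mx (m n : nat) (X : 'M[C]_(m, n)) : Prop :=
  forall i j, 0 <= X i j.

Definition stable_mx (n : nat) (X : 'M[C]_n) : Prop :=
  forall a : C, eigenvalue X a -> `|a| <= 1.

Definition frob (m n : nat) (X : 'M[C]_(m, n)) : C :=
  sqrtC (\sum_(i < m) \sum_(j < n) `|X i j| ^+ 2).

Definition closest_stable_nonneg (n : nat) (B X : 'M[C]_n) : Prop :=
  [/\ nonneg_mx X, stable_mx X &
      forall Y : 'M[C]_n, nonneg_mx Y -> stable_mx Y -> frob (X - B) <= frob (Y - B)].

(* principal submatrix of M on the index set S (indices in increasing order) *)
Definition blocksub (d : nat) (M : 'M[C]_d) (S : {set 'I_d}) : 'M[C]_#|S| :=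
  \matrix_(i, j) M (enum_val i) (enum_val j).

End Defs.

Definition blockset (d : nat) (blk : 'I_d -> nat) (b : nat) : {set 'I_d} :=
  [set k | blk k == b].

(* Conjugating by the permutation preserves non-negativity, the spectrum and the
   Frobenius norm, so only the block upper triangular matrix At matters. The
   eigenvalues of a block triangular matrix are those of its diagonal blocks,
   so Xt is stable and non-negative. For any stable non-negative Y, each
   diagonal block of Y is stable too, because for non-negative matrices the
   spectral radius does not increase on principal submatrices; hence it is at
   least as far from the corresponding block of At as the block of Xt. As Xt
   agrees with At off the diagonal blocks,
     |Xt - At|^2 = sum_i |Xt_ii - At_ii|^2 <= sum_i |Y_ii - At_ii|^2 <= |Y - At|^2.
   The monotonicity of the spectral radius is proved without Perron-Frobenius
   theory: if det (s - Y) > 0 for all real s >= t, then adj (t - Y) >= 0 (by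
   induction on the dimension through Schur complements, using sign arguments
   for real polynomials), and this rules out a non-zero W >= 0 with
   W Y >= t W, which a principal submatrix with an eigenvalue of modulus t > 1
   would provide. *)

From HB Require Import structures.
From mathcomp Require Import all_boot all_order all_algebra all_fingroup.
From mathcomp Require Import zify ring.
Import Order.TTheory GRing.Theory Num.Theory.
Local Open Scope ring_scope.
Set Implicit Arguments. Unset Strict Implicit. Unset Printing Implicit Defensive.

Section RealPoly.
Variable C : numClosedFieldType.
Implicit Types (p q g : {poly C}) (r s t z : C).

Definition real_poly p := map_poly (@Num.conj C) p = p.

Lemma real_poly_horner p s : real_poly p -> s \is Num.real -> p.[s] \is Num.real.
Proof.
by move=> rp rs; rewrite CrealE -{2}(conj_Creal rs) -{2}rp horner_map.
Qed.

Lemma real_poly_lead_coef p : real_poly p -> lead_coef p \is Num.real.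
Proof. by move=> rp; rewrite CrealE lead_coefE -coef_map rp -lead_coefE. Qed.

Lemma real_poly_divp p q g :
  g != 0 -> real_poly g -> p = q * g -> real_poly p -> real_poly q.
Proof.
by move=> g0 rg Dp rp; apply: (mulIf g0); rewrite -{1}rg -rmorphM /= -Dp rp.
Qed.

Lemma real_poly_XsubC z : z \is Num.real -> real_poly ('X - z%:P).
Proof. by move=> zr; rewrite /real_poly map_polyXsubC /= conj_Creal. Qed.

Lemma real_poly_conj_pair z : real_poly (('X - z%:P) * ('X - (z^*)%:P)).
Proof. by rewrite /real_poly rmorphM /= !map_polyXsubC /= conjCK mulrC. Qed.

(* Positivity on these factors suffices: over C a real polynomial is its leading
   coefficient times linear factors at its real roots and quadratic factors at
   pairs of conjugate non-real roots. *)
Lemma real_poly_factorwise_gt0 (E : {poly C} -> C) :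
  {morph E : p q / p * q} ->
  (forall z, z \isn't Num.real -> 0 < E (('X - z%:P) * ('X - (z^*)%:P))) ->
  forall p, real_poly p -> p != 0 -> 0 < E (lead_coef p)%:P ->
  (forall z, z \is Num.real -> root p z -> 0 < E ('X - z%:P)) -> 0 < E p.
Proof.
move=> EM Epair p; move: {2}(size p) (leqnn (size p)) => n.
elim: n p => [|n IH] p; first by rewrite leqn0 size_poly_eq0 => /eqP-> _ /eqP.
move=> szp rp p0 Elc Eroot.
have peel q g : g \is monic -> (1 < size g)%N -> real_poly g -> 0 < E g ->
    p = q * g -> 0 < E p.
  move=> gm g1 rg Eg Dp.
  have q0 : q != 0 by apply: contraNneq p0 => q0; rewrite Dp q0 mul0r.
  have szq : (size q < size p)%N by rewrite Dp size_Mmonic //; lia.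
  rewrite Dp EM mulr_gt0 // IH //.
  - by rewrite -ltnS (leq_trans szq).
  - exact: real_poly_divp (monic_neq0 gm) rg Dp rp.
  - by rewrite -(lead_coef_Mmonic q gm) -Dp.
  - by move=> z zr qz; rewrite Eroot // Dp rootM qz.
have [[z pz]|/negPn sz1] := altP (closed_rootP p); last first.
  suff -> : p = (lead_coef p)%:P by [].
  by rewrite lead_coefE (eqP sz1) -size1_polyC // (eqP sz1).
have /factor_theorem[q1 Dp] := pz; have [zr|znr] := boolP (z \is Num.real).
  apply: (peel q1 _ (monicXsubC z) _ (real_poly_XsubC zr) (Eroot z zr pz) Dp).
  by rewrite size_XsubC.
have zz : z^* != z by rewrite -CrealE.
have /factor_theorem[q Dq1] : root q1 z^*.
  have : root p z^* by rewrite -rp rootE horner_map (rootP pz) rmorph0.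
  by rewrite Dp rootM root_XsubC (negbTE zz) orbF.
apply: (peel q _ _ _ (real_poly_conj_pair z) (Epair z znr)).
- by rewrite monicMl ?monicXsubC.
- by rewrite size_Mmonic ?monicXsubC ?polyXsubC_eq0 // !size_XsubC.
- by rewrite Dp Dq1 -mulrA [('X - _) * _]mulrC.
Qed.

Lemma conj_pair_horner_gt0 z s : s \is Num.real -> z \isn't Num.real ->
  0 < (('X - z%:P) * ('X - (z^*)%:P)).[s].
Proof.
move=> sr znr; rewrite hornerM !hornerXsubC -[s in s - z^*](conj_Creal sr).
rewrite -rmorphB mul_conjC_gt0 subr_eq0.
by apply: contraNneq znr => <-.
Qed.

Lemma real_poly_horner_gt0 p s : real_poly p -> p != 0 -> 0 < lead_coef p ->
  s \is Num.real -> (forall z, z \is Num.real -> root p z -> z < s) ->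
  0 < p.[s].
Proof.
move=> rp p0 lc sr ltzs.
apply: (@real_poly_factorwise_gt0 (horner^~ s)) => //.
- by move=> q r; rewrite /= hornerM.
- by move=> z znr; apply: conj_pair_horner_gt0.
- by rewrite hornerC.
- by move=> z zr pz; rewrite hornerXsubC subr_gt0 ltzs.
Qed.

Lemma real_poly_horner_mul_gt0 p a b : real_poly p -> p != 0 ->
  a \is Num.real -> b \is Num.real -> a <= b ->
  (forall z, z \is Num.real -> root p z -> (z < a) || (b < z)) ->
  0 < p.[a] * p.[b].
Proof.
move=> rp p0 ar br ab hz.
apply: (@real_poly_factorwise_gt0 (fun q => q.[a] * q.[b])) => //.
- by move=> q r; rewrite !hornerM mulrACA.
- by move=> z znr; rewrite mulr_gt0 ?conj_pair_horner_gt0.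
- rewrite !hornerC -[X in _ * X](conj_Creal (real_poly_lead_coef rp)).
  by rewrite mul_conjC_gt0 lead_coef_eq0.
- move=> z zr pz; rewrite !hornerXsubC; case/orP: (hz z zr pz) => [za|bz].
    by rewrite mulr_gt0 // subr_gt0 // (lt_le_trans za).
  by rewrite -mulrNN !opprB mulr_gt0 // subr_gt0 // (le_lt_trans ab).
Qed.

Lemma real_seq_max (xs : seq C) : xs != [::] ->
  all (fun x => x \is Num.real) xs ->
  exists2 m, m \in xs & forall x, x \in xs -> x <= m.
Proof.
elim: xs => // x xs IH _ /andP[xr xsr].
have [->|xs0] := eqVneq xs [::].
  by exists x => [|y]; rewrite ?mem_seq1 // => /eqP->.
have [m mxs mmax] := IH xs0 xsr.
have [xm|mx] := real_leP xr (allP xsr m mxs).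
  exists m => [|y]; first by rewrite inE mxs orbT.
  by rewrite inE => /orP[/eqP->|/mmax].
exists x => [|y]; first by rewrite inE eqxx.
by rewrite inE => /orP[/eqP->//|/mmax/le_trans]; apply; apply: ltW.
Qed.

Lemma real_roots_seq p : p != 0 -> exists rs : seq C,
  forall z, (z \in rs) = (z \is Num.real) && root p z.
Proof.
move=> p0; have [rs Dp] := closed_field_poly_normal p.
exists [seq z <- rs | z \is Num.real] => z.
by rewrite mem_filter {1}Dp rootZ ?lead_coef_eq0 // root_prod_XsubC andbC.
Qed.

Lemma real_poly_max_root p t : p != 0 -> t \is Num.real ->
  (forall z, z \is Num.real -> root p z -> z < t) \/
  exists r, [/\ r \is Num.real, t <= r, root p r &
              forall z, z \is Num.real -> root p z -> z <= r].
Proof.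
move=> p0 tr; have [rs rsE] := real_roots_seq p0.
have [ts0|ts0] := eqVneq [seq z <- rs | t <= z] [::].
  left=> z zr pz; rewrite real_ltNge //; apply: contraFN (in_nil z) => tz.
  by rewrite -ts0 mem_filter tz rsE zr.
have tsr : all (fun x => x \is Num.real) [seq z <- rs | t <= z].
  by apply/allP => z; rewrite mem_filter rsE => /and3P[].
have [r] := real_seq_max ts0 tsr; rewrite mem_filter rsE => /and3P[tr' rr pr] rmax.
right; exists r; split=> // z zr pz.
have [tz|zt] := real_leP tr zr; first by rewrite rmax // mem_filter tz rsE zr.
by rewrite ltW // (lt_le_trans zt).
Qed.

Lemma real_poly_root_gap p r : p != 0 -> r \is Num.real ->
  exists2 s, s \is Num.real /\ r < s &
    forall z, z \is Num.real -> root p z -> r < z -> s < z.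
Proof.
move=> p0 rr; have [rs rsE] := real_roots_seq p0.
set zs := [seq z <- rs | r < z].
have [zs0|zs0] := eqVneq zs [::].
  exists (r + 1); first by rewrite rpredD ?real1 // ltrDl.
  by move=> z zr pz rz; have := in_nil z; rewrite -zs0 mem_filter rz rsE zr pz.
have zsr : all (fun x => x \is Num.real) (map -%R zs).
  apply/allP => _ /mapP[x xzs ->]; move: xzs.
  by rewrite rpredN mem_filter rsE => /and3P[].
have zs0' : map -%R zs != [::] by rewrite -size_eq0 size_map size_eq0.
have [m /mapP[z0 z0zs ->] z0min] := real_seq_max zs0' zsr.
move: (z0zs); rewrite mem_filter rsE => /andP[rz0 /andP[z0r _]].
have [rs0 s0z0] := midf_lt rz0.
exists ((r + z0) / 2); first by split=> //; rewrite rpredM ?rpredD ?rpredV ?rpred_nat.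
move=> z zr pz rz; apply: (lt_le_trans s0z0).
by rewrite -lerN2 z0min // map_f // mem_filter rz rsE zr.
Qed.

Lemma real_poly_horner_ge0_right q r : real_poly q -> r \is Num.real ->
  (forall s, s \is Num.real -> r < s -> 0 <= q.[s]) -> 0 <= q.[r].
Proof.
move=> rq rr qge0; have qr := real_poly_horner rq rr.
rewrite real_leNgt ?real0 //; apply/negP => qneg.
have q0 : q != 0 by apply: contraTneq qneg => ->; rewrite horner0 ltxx.
have [s [sr rs] gap] := real_poly_root_gap q0 rr.
have : 0 < q.[r] * q.[s].
  apply: real_poly_horner_mul_gt0 => // [|z zr qz]; first exact: ltW.
  have [//|rz|zE] := real_ltgtP zr rr; first by rewrite gap.
  by move: qz; rewrite zE => /rootP qr0; rewrite qr0 ltxx in qneg.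
by move/lt_geF; rewrite mulr_le0_ge0 ?(ltW qneg) ?qge0.
Qed.


End RealPoly.

Section CharacteristicMatrix.
Variable R : comNzRingType.

Lemma ulsubmx_scalar_sub n (Y : 'M[R]_(1 + n)) t :
  ulsubmx (t%:M - Y) = (t - ulsubmx Y 0 0)%:M.
Proof. by apply/matrixP => i j; rewrite !mxE eq_lshift !ord1 eqxx !mulr1n. Qed.

Lemma ursubmx_scalar_sub n (Y : 'M[R]_(1 + n)) t :
  ursubmx (t%:M - Y) = - ursubmx Y.
Proof. by apply/matrixP => i j; rewrite !mxE eq_lrshift mulr0n sub0r. Qed.

Lemma dlsubmx_scalar_sub n (Y : 'M[R]_(1 + n)) t :
  dlsubmx (t%:M - Y) = - dlsubmx Y.
Proof. by apply/matrixP => i j; rewrite !mxE eq_rlshift mulr0n sub0r. Qed.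

Lemma drsubmx_scalar_sub n (Y : 'M[R]_(1 + n)) t :
  drsubmx (t%:M - Y) = t%:M - drsubmx Y.
Proof. by apply/matrixP => i j; rewrite !mxE eq_rshift. Qed.

Lemma horner_char_poly_mx n (Y : 'M[R]_n) s :
  map_mx (horner_eval s) (char_poly_mx Y) = s%:M - Y.
Proof.
apply/matrixP => i j; rewrite !mxE /= horner_evalE.
by rewrite hornerD hornerN hornerMn hornerX hornerC.
Qed.

Lemma horner_char_poly n (Y : 'M[R]_n) s : (char_poly Y).[s] = \det (s%:M - Y).
Proof. by rewrite -horner_char_poly_mx det_map_mx. Qed.

Lemma horner_adj_char_poly_mx n (Y : 'M[R]_n) s i j :
  (\adj (char_poly_mx Y) i j).[s] = \adj (s%:M - Y) i j.
Proof. by rewrite -horner_char_poly_mx -map_mx_adj [RHS]mxE. Qed.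

End CharacteristicMatrix.

Lemma det_block_adj (R : idomainType) n (M : 'M[R]_(1 + n)) :
  \det (drsubmx M) != 0 ->
  \det M = ulsubmx M 0 0 * \det (drsubmx M)
           - (ursubmx M *m \adj (drsubmx M) *m dlsubmx M) 0 0.
Proof.
move=> d0; set N := drsubmx M; set d := \det N.
pose Q := block_mx (d%:M : 'M_1) 0 (- (\adj N *m dlsubmx M)) (1%:M : 'M_n).
have MQ : M *m Q = block_mx (d *: ulsubmx M - ursubmx M *m \adj N *m dlsubmx M)
                      (ursubmx M) 0 N.
  rewrite -[M in M *m Q]submxK mulmx_block -/N.
  rewrite !mulmx0 !mulmx1 !add0r !mul_mx_scalar !mulmxN !mulmxA mul_mx_adj.
  by rewrite mul_scalar_mx subrr.
have := congr1 determinant MQ.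
rewrite det_mulmx det_lblock det1 mulr1 det_mx11 mxE det_ublock det_mx11 -/d.
by rewrite !mxE => /(mulIf d0); rewrite mulrC.
Qed.

(* Unlike det_block_adj this needs no invertibility: it is the evaluation at s of
   that identity for the characteristic matrix, whose lower block has a monic
   determinant. *)
Lemma det_scalar_sub_block (R : idomainType) n (Y : 'M[R]_(1 + n)) s :
  \det (s%:M - Y) = (s - ulsubmx Y 0 0) * \det (s%:M - drsubmx Y)
     - (ursubmx Y *m \adj (s%:M - drsubmx Y) *m dlsubmx Y) 0 0.
Proof.
have cpmD : drsubmx (char_poly_mx Y) = char_poly_mx (drsubmx Y).
  by apply/matrixP => i j; rewrite !mxE eq_rshift.
have := @det_block_adj _ _ (char_poly_mx Y); rewrite cpmD.
move=> /(_ (monic_neq0 (char_poly_monic _)))/(congr1 (horner_eval s)).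
rewrite -det_map_mx horner_char_poly_mx => ->.
rewrite rmorphB rmorphM /= -det_map_mx horner_char_poly_mx.
have mapE (A : 'M_1) : horner_eval s (A 0 0) = map_mx (horner_eval s) A 0 0.
  by rewrite mxE.
rewrite !mapE !map_mxM map_mx_adj map_ulsubmx map_ursubmx map_dlsubmx.
rewrite !horner_char_poly_mx ulsubmx_scalar_sub ursubmx_scalar_sub.
by rewrite dlsubmx_scalar_sub mulNmx mulmxN mulNmx opprK mxE eqxx mulr1n.
Qed.

Lemma mul_block_schur_inv (F : fieldType) n (a b : F) (B : 'M_(1, n))
    (Cc : 'M_(n, 1)) (N Ni : 'M_n) :
  N *m Ni = 1%:M -> B *m Ni *m Cc = b%:M -> a != b ->
  let s := a - b in
  block_mx a%:M (- B) (- Cc) N *m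
  block_mx s^-1%:M (s^-1 *: (B *m Ni)) (s^-1 *: (Ni *m Cc))
           (Ni + s^-1 *: (Ni *m Cc *m B *m Ni)) = 1%:M.
Proof.
move=> NNi BNiC ab s; have s0 : s != 0 by rewrite subr_eq0.
rewrite mulmx_block [RHS]scalar_mx_block; congr block_mx.
- rewrite mul_scalar_mx scale_scalar_mx mulNmx -scalemxAr !mulmxA BNiC.
  by rewrite scale_scalar_mx -raddfB /= mulrC -mulrBr mulVf.
- rewrite mul_scalar_mx scalerA mulNmx mulmxDr -!scalemxAr !mulmxA BNiC.
  rewrite mul_scalar_mx -scalemxAl scalerA -[X in _ - (X + _)]scale1r.
  rewrite -scalerDl -scalerBl.
  suff -> : a / s - (1 + s^-1 * b) = 0 by rewrite scale0r.
  by rewrite /s; field; rewrite subr_eq0.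
- by rewrite mul_mx_scalar -scalemxAr mulmxA NNi mul1mx scalerN addNr.
- rewrite mulmxDr -!scalemxAr !mulmxA NNi !mul1mx mulNmx mulNmx scalerN.
  by rewrite addrCA addNr addr0.
Qed.

Section NonnegativeInverse.
Variable C : numClosedFieldType.

Lemma nonneg_mulmx m n p (A : 'M[C]_(m, n)) (B : 'M[C]_(n, p)) :
  nonneg_mx A -> nonneg_mx B -> nonneg_mx (A *m B).
Proof. by move=> nA nB i j; rewrite mxE sumr_ge0 // => k _; apply: mulr_ge0. Qed.

Lemma nonneg_block_mx m1 m2 n1 n2 (A : 'M[C]_(m1, n1)) (B : 'M[C]_(m1, n2))
    (D : 'M[C]_(m2, n1)) (E : 'M[C]_(m2, n2)) :
  nonneg_mx A -> nonneg_mx B -> nonneg_mx D -> nonneg_mx E ->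
  nonneg_mx (block_mx A B D E).
Proof.
move=> nA nB nD nE i j.
case: (split_ordP i) => {}i ->; case: (split_ordP j) => {}j ->.
- by rewrite block_mxEul.
- by rewrite block_mxEur.
- by rewrite block_mxEdl.
- by rewrite block_mxEdr.
Qed.

Lemma nonneg_block_schur_inv n a (B : 'M[C]_(1, n)) (Cc : 'M[C]_(n, 1))
    (N Ni : 'M[C]_n) :
  nonneg_mx B -> nonneg_mx Cc -> nonneg_mx Ni -> N *m Ni = 1%:M ->
  0 < a - (B *m Ni *m Cc) 0 0 ->
  exists2 P, nonneg_mx P & block_mx a%:M (- B) (- Cc) N *m P = 1%:M.
Proof.
move=> nB nCc nNi NNi; set b := (_ *m _ *m _) 0 0 => s_gt0.
have BNiC : B *m Ni *m Cc = b%:M by apply: mx11_scalar.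
have ab : a != b by rewrite -subr_eq0 gt_eqF.
have si : 0 <= (a - b)^-1 by rewrite invr_ge0 ltW.
eexists; last exact: mul_block_schur_inv NNi BNiC ab.
have nZ m p (M : 'M[C]_(m, p)) : nonneg_mx M -> nonneg_mx ((a - b)^-1 *: M).
  by move=> nM i j; rewrite mxE mulr_ge0.
apply: nonneg_block_mx.
- by move=> i j; rewrite mxE mulrn_wge0.
- by apply: nZ; apply: nonneg_mulmx.
- by apply: nZ; apply: nonneg_mulmx.
- move=> i j; rewrite mxE addr_ge0 //.
  by apply: nZ; repeat apply: nonneg_mulmx.
Qed.

Lemma conj_nonneg_mx m n (M : 'M[C]_(m, n)) :
  nonneg_mx M -> map_mx (@Num.conj C) M = M.
Proof. by move=> nM; apply/matrixP => i j; rewrite mxE conj_Creal // ger0_real. Qed.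

Lemma real_poly_char_poly n (Y : 'M[C]_n) : nonneg_mx Y -> real_poly (char_poly Y).
Proof. by move=> nY; rewrite /real_poly map_char_poly conj_nonneg_mx. Qed.

Lemma real_poly_adj_char_poly_mx n (Y : 'M[C]_n) i j :
  nonneg_mx Y -> real_poly (\adj (char_poly_mx Y) i j).
Proof.
move=> nY; rewrite /real_poly.
transitivity (map_mx (map_poly (@Num.conj C)) (\adj (char_poly_mx Y)) i j).
  by rewrite [RHS]mxE.
by rewrite map_mx_adj map_char_poly_mx conj_nonneg_mx.
Qed.

Definition det_shift_pos n (Y : 'M[C]_n) t :=
  forall s, s \is Num.real -> t <= s -> 0 < \det (s%:M - Y).

Lemma det_shift_pos_char_root n (Y : 'M[C]_n) t : nonneg_mx Y ->
  (forall z, z \is Num.real -> root (char_poly Y) z -> z < t) ->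
  det_shift_pos Y t.
Proof.
move=> nY ltzt s sr ts; rewrite -horner_char_poly.
apply: real_poly_horner_gt0 => //.
- exact: real_poly_char_poly.
- exact: monic_neq0 (char_poly_monic Y).
- by rewrite (monicP (char_poly_monic Y)) ltr01.
- by move=> z zr pz; rewrite (lt_le_trans (ltzt z zr pz)).
Qed.

(* If the lower block D had a real eigenvalue beyond t, at the largest one r the
   adjugate of r - D would be non-negative by continuity, and the Schur expansion
   would make det (r - Y) non-positive. *)
Lemma det_shift_pos_drsubmx n (Y : 'M[C]_(1 + n)) t :
  (forall s, s \is Num.real -> det_shift_pos (drsubmx Y) s ->
     nonneg_mx (\adj (s%:M - drsubmx Y))) ->
  nonneg_mx Y -> t \is Num.real -> det_shift_pos Y t ->
  det_shift_pos (drsubmx Y) t.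
Proof.
move=> adjD_ge0 nY tr posY; set D := drsubmx Y.
have nD : nonneg_mx D by move=> i j; rewrite /D !mxE; apply: nY.
have [|[r [rr tr' pr rmax]]] := real_poly_max_root (monic_neq0 (char_poly_monic D)) tr.
  exact: det_shift_pos_char_root.
have posD s : s \is Num.real -> r < s -> det_shift_pos D s.
  move=> sr rs; apply: det_shift_pos_char_root => // z zr pz.
  exact: le_lt_trans (rmax z zr pz) rs.
have adj_ge0 : nonneg_mx (\adj (r%:M - D)).
  move=> i j; rewrite -horner_adj_char_poly_mx.
  apply: real_poly_horner_ge0_right rr _ => [|s sr rs].
    exact: real_poly_adj_char_poly_mx. rewrite horner_adj_char_poly_mx.
  exact: adjD_ge0 sr (posD s sr rs) i j.
have nU : nonneg_mx (ursubmx Y) by move=> i j; rewrite !mxE; apply: nY.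
have nL : nonneg_mx (dlsubmx Y) by move=> i j; rewrite !mxE; apply: nY.
have := posY r rr tr'; rewrite det_scalar_sub_block -/D -horner_char_poly.
rewrite (rootP pr) mulr0 sub0r oppr_gt0 => /lt_geF.
by rewrite (nonneg_mulmx (nonneg_mulmx nU adj_ge0) nL).
Qed.

(* t - Y is inverted through the Schur complement of its first entry. *)
Lemma nonneg_adj_shift_block n (Y : 'M[C]_(1 + n)) t :
  (forall (D : 'M[C]_n) s, nonneg_mx D -> s \is Num.real ->
     det_shift_pos D s -> nonneg_mx (\adj (s%:M - D))) ->
  nonneg_mx Y -> t \is Num.real -> det_shift_pos Y t ->
  nonneg_mx (\adj (t%:M - Y)).
Proof.
move=> adj_ge0 nY tr posY; set D := drsubmx Y.
have nD : nonneg_mx D by move=> i j; rewrite /D !mxE.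
have nU : nonneg_mx (ursubmx Y) by move=> i j; rewrite !mxE.
have nL : nonneg_mx (dlsubmx Y) by move=> i j; rewrite !mxE.
have posD := det_shift_pos_drsubmx (fun s sr => adj_ge0 D s nD sr) nY tr posY.
set N := t%:M - D; have dN : 0 < \det N := posD t tr (lexx t).
set Ni := (\det N)^-1 *: \adj N.
have NNi : N *m Ni = 1%:M.
  by rewrite -scalemxAr mul_mx_adj scale_scalar_mx mulVf ?gt_eqF.
have nNi : nonneg_mx Ni.
  by move=> i j; rewrite mxE mulr_ge0 ?invr_ge0 ?(ltW dN) //; apply: adj_ge0.
have detY : \det (t%:M - Y) = \det N *
    (t - ulsubmx Y 0 0 - (ursubmx Y *m Ni *m dlsubmx Y) 0 0).
  have adjN : \adj N = \det N *: Ni by rewrite scalerA mulfV ?gt_eqF ?scale1r.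
  rewrite det_scalar_sub_block -/D -/N adjN -scalemxAr -scalemxAl.
  by rewrite [in X in _ - X]mxE mulrBr mulrC.
have s_gt0 : 0 < t - ulsubmx Y 0 0 - (ursubmx Y *m Ni *m dlsubmx Y) 0 0.
  by rewrite -(pmulr_rgt0 _ dN) -detY posY.
have [P nP MP] := nonneg_block_schur_inv nU nL nNi NNi s_gt0.
have invP : (t%:M - Y) *m P = 1%:M.
  rewrite -[t%:M - Y]submxK ulsubmx_scalar_sub ursubmx_scalar_sub.
  by rewrite dlsubmx_scalar_sub drsubmx_scalar_sub.
have -> : \adj (t%:M - Y) = \det (t%:M - Y) *: P.
  by rewrite -[\adj _]mulmx1 -invP mulmxA mul_adj_mx mul_scalar_mx.
by move=> i j; rewrite mxE (mulr_ge0 (ltW (posY t tr (lexx t))) (nP i j)).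
Qed.

Lemma nonneg_adj_shift n (Y : 'M[C]_n) t : nonneg_mx Y -> t \is Num.real ->
  det_shift_pos Y t -> nonneg_mx (\adj (t%:M - Y)).
Proof.
elim: n Y t => [|n IH] Y t; first by move=> _ _ _ [].
exact: nonneg_adj_shift_block.
Qed.

Lemma det_shift_pos_stable n (Y : 'M[C]_n) t :
  nonneg_mx Y -> stable_mx Y -> 1 < t -> det_shift_pos Y t.
Proof.
move=> nY sY t1; apply: det_shift_pos_char_root => // z zr pz.
have ez : eigenvalue Y z by rewrite eigenvalue_root_char.
exact: le_lt_trans (real_ler_norm zr) (le_lt_trans (sY z ez) t1).
Qed.

Lemma nonneg_subinvariant_eq0 n (M : 'M[C]_n) (W : 'rV[C]_n) :
  0 < \det M -> nonneg_mx (\adj M) -> nonneg_mx W ->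
  (forall k, (W *m M) 0 k <= 0) -> W = 0.
Proof.
move=> dM nadj nW WM_le0; apply/matrixP => i l; rewrite ord1 mxE.
apply/eqP; rewrite eq_le nW andbT -(pmulr_rle0 _ dM).
have -> : \det M * W 0 l = (W *m M *m \adj M) 0 l.
  by rewrite -mulmxA mul_mx_adj mul_mx_scalar mxE.
by rewrite mxE sumr_le0 // => k _; rewrite mulr_le0_ge0.
Qed.

(* The moduli of a left eigenvector of a principal submatrix, extended by zero,
   form a non-negative vector that Y stretches by at least |mu|. *)
Lemma blocksub_eigen_subinvariant d (Y : 'M[C]_d) (S : {set 'I_d}) mu
    (u : 'rV[C]_#|S|) :
  nonneg_mx Y -> u *m blocksub Y S = mu *: u -> u != 0 ->
  exists W : 'rV[C]_d, [/\ nonneg_mx W, W != 0 &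
    forall l, `|mu| * W 0 l <= (W *m Y) 0 l].
Proof.
move=> nY uB u0.
pose W := \row_k if [pick i | enum_val i == k] is Some i then `|u 0 i| else 0.
have WS i : W 0 (enum_val i) = `|u 0 i|.
  rewrite mxE; case: pickP => [i' /eqP/enum_val_inj -> //|/(_ i)].
  by rewrite eqxx.
have WnS l : l \notin S -> W 0 l = 0.
  move=> lS; rewrite mxE; case: pickP => // i /eqP iE.
  by case/negP: lS; rewrite -iE enum_valP.
have nW : nonneg_mx W.
  by move=> i k; rewrite ord1 mxE; case: pickP.
have WY_ge l : \sum_i `|u 0 i| * Y (enum_val i) l <= (W *m Y) 0 l.
  rewrite mxE (bigID (mem S)) /= [\sum_(i in S) _]big_enum_val /=.
  under [X in _ <= X + _]eq_bigr do rewrite WS.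
  by rewrite lerDl sumr_ge0 // => k _; rewrite mulr_ge0.
exists W; split=> // [|l].
  apply: contraNneq u0 => W0; apply/eqP/matrixP => i j.
  by rewrite ord1 mxE; apply/eqP; rewrite -normr_eq0 -WS W0 mxE.
have [lS|lS] := boolP (l \in S); last first.
  by rewrite WnS // mulr0 (le_trans _ (WY_ge l)) // sumr_ge0 // => i _; rewrite mulr_ge0.
rewrite -(enum_rankK_in lS lS) WS -normrM; apply: le_trans (WY_ge _).
have -> : mu * u 0 (enum_rank_in lS l) = (u *m blocksub Y S) 0 (enum_rank_in lS l).
  by rewrite uB mxE.
rewrite mxE (le_trans (ler_norm_sum _ _ _)) // ler_sum // => i _.
by rewrite normrM mxE [`|Y _ _|]ger0_norm.
Qed.

Lemma stable_blocksub d (Y : 'M[C]_d) (S : {set 'I_d}) :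
  nonneg_mx Y -> stable_mx Y -> stable_mx (blocksub Y S).
Proof.
move=> nY sY mu /eigenvalueP[u uB u0].
rewrite real_leNgt ?normr_real ?real1 //; apply/negP => mu_gt1.
have [W [nW W0 WY]] := blocksub_eigen_subinvariant nY uB u0.
have tr : `|mu| \is Num.real := normr_real mu.
have posY := det_shift_pos_stable nY sY mu_gt1.
case/eqP: W0; apply: nonneg_subinvariant_eq0 (posY _ tr (lexx _)) _ nW _.
  exact: nonneg_adj_shift.
move=> k; rewrite mulmxBr mul_mx_scalar [X in X <= 0]mxE.
by rewrite [X in X + _]mxE [X in _ + X]mxE subr_le0.
Qed.

End NonnegativeInverse.

Section PermConjugation.
Variables (C : numClosedFieldType) (n : nat) (p : 'S_n).
Implicit Types M N : 'M[C]_n.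

Definition perm_conj M := perm_mx p *m M *m perm_mx p^-1.

Lemma perm_conjE M i j : perm_conj M i j = M (p i) (p j).
Proof. by rewrite /perm_conj -row_permE -col_permE !mxE. Qed.

Lemma perm_conjB M N : perm_conj (M - N) = perm_conj M - perm_conj N.
Proof. by rewrite /perm_conj mulmxBr mulmxBl. Qed.

Lemma nonneg_perm_conj M : nonneg_mx M -> nonneg_mx (perm_conj M).
Proof. by move=> nM i j; rewrite perm_conjE. Qed.

Lemma frob_perm_conj M : frob (perm_conj M) = frob M.
Proof.
rewrite /frob; congr sqrtC; rewrite [RHS](reindex_inj (@perm_inj _ p)).
apply: eq_bigr => i _; rewrite [RHS](reindex_inj (@perm_inj _ p)).
by apply: eq_bigr => j _; rewrite perm_conjE.
Qed.

Lemma stable_perm_conj M : stable_mx M -> stable_mx (perm_conj M).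
Proof.
move=> sM a /eigenvalueP[v vM v0]; apply: sM; apply/eigenvalueP.
have pMp : perm_mx p *m M = perm_conj M *m perm_mx p.
  by rewrite /perm_conj -mulmxA -perm_mxM mulVg perm_mx1 mulmx1.
exists (v *m perm_mx p); first by rewrite -mulmxA pMp mulmxA vM scalemxAl.
apply: contraNneq v0 => vp0.
by rewrite -[v]mulmx1 -(perm_mx1 C n) -(mulgV p) perm_mxM mulmxA vp0 mul0mx.
Qed.

End PermConjugation.

Lemma perm_conjK (C : numClosedFieldType) n (p : 'S_n) (M : 'M[C]_n) :
  perm_conj p^-1 (perm_conj p M) = M.
Proof. by apply/matrixP => i j; rewrite !perm_conjE !permKV. Qed.

Section BlockTriangular.
Variables (C : numClosedFieldType) (d : nat) (blk : 'I_d -> nat).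
Local Notation block M b := (blocksub M (blockset blk b)).

Lemma blocksubB (M N : 'M[C]_d) S : blocksub (M - N) S = blocksub M S - blocksub N S.
Proof. by apply/matrixP => i j; rewrite !mxE. Qed.

Lemma blockset_enum_val b (i : 'I_#|blockset blk b|) : blk (enum_val i) = b.
Proof. by have := enum_valP i; rewrite inE => /eqP. Qed.

Lemma nonneg_block_entries (M : 'M[C]_d) :
  (forall b, nonneg_mx (block M b)) ->
  (forall k l, blk k != blk l -> 0 <= M k l) -> nonneg_mx M.
Proof.
move=> nB nM k l; have [kl|/nM//] := eqVneq (blk k) (blk l).
have kS : k \in blockset blk (blk k) by rewrite inE.
have lS : l \in blockset blk (blk k) by rewrite inE kl.
by have := nB (blk k) (enum_rank_in kS k) (enum_rank_in kS l); rewrite mxE !enum_rankK_in.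
Qed.

(* An eigenvector of a block upper triangular matrix restricts to an eigenvector
   of the diagonal block of its first non-zero block of coordinates. *)
Lemma stable_block_triangular (X : 'M[C]_d) :
  (forall k l, (blk l < blk k)%N -> X k l = 0) ->
  (forall b, stable_mx (block X b)) -> stable_mx X.
Proof.
move=> lowX sB a /eigenvalueP[v vX v0].
have ex_b : exists b, [exists k, (v 0 k != 0) && (blk k == b)].
  have [k vk] : exists k, v 0 k != 0.
    apply/existsP; apply: contraNT v0 => /existsPn v0.
    by apply/eqP/matrixP => i k; rewrite ord1 mxE; apply/eqP/negPn.
  by exists (blk k); apply/existsP; exists k; rewrite vk eqxx.
have [b0 /existsP[k0 /andP[vk0 /eqP bk0]] b0_min] := ex_minnP ex_b.
have v_low k : (blk k < b0)%N -> v 0 k = 0.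
  move=> lt_kb0; apply/eqP; apply: contraTT lt_kb0 => vk; rewrite -leqNgt.
  by apply: b0_min; apply/existsP; exists k; rewrite vk eqxx.
set S := blockset blk b0.
have k0S : k0 \in S by rewrite inE bk0.
apply: (sB b0 a); apply/eigenvalueP; exists (\row_i v 0 (enum_val i)).
  apply/matrixP => i j; rewrite !mxE.
  have := congr1 (fun M : 'rV[C]_d => M 0 (enum_val j)) vX; rewrite !mxE => <-.
  rewrite [RHS](bigID (mem S)) /= [X in _ = _ + X]big1 ?addr0.
    by rewrite [RHS]big_enum_val; apply: eq_bigr => k _; rewrite !mxE.
  move=> l lS; have := blockset_enum_val j; rewrite -/S => bj.
  have bl : blk l != b0 by rewrite inE in lS.
  case: ltngtP bl => // [/v_low->|hl] _; first by rewrite mul0r.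
  by rewrite lowX ?mulr0 // bj.
apply: contraNneq vk0 => /matrixP/(_ 0 (enum_rank_in k0S k0)).
by rewrite !mxE enum_rankK_in // => ->.
Qed.

Definition frob2 m n (M : 'M[C]_(m, n)) := \sum_i \sum_j `|M i j| ^+ 2.

Lemma frob2_ge0 m n (M : 'M[C]_(m, n)) : 0 <= frob2 M.
Proof. by apply: sumr_ge0 => i _; apply: sumr_ge0 => j _; apply: exprn_ge0. Qed.

Lemma frob_leE m n (M N : 'M[C]_(m, n)) : (frob M <= frob N) = (frob2 M <= frob2 N).
Proof. by rewrite /frob ler_sqrtC ?nnegrE ?frob2_ge0. Qed.

Lemma frob2_block (M : 'M[C]_d) b : frob2 (block M b) =
  \sum_(k | blk k == b) \sum_(l | blk k == blk l) `|M k l| ^+ 2.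
Proof.
rewrite /frob2 (eq_bigl (fun k => k \in blockset blk b)) => [|k]; last first.
  by rewrite inE.
rewrite [RHS]big_enum_val; apply: eq_bigr => i _.
rewrite (eq_bigl (fun l => l \in blockset blk b)) => [|l]; last first.
  by rewrite inE blockset_enum_val eq_sym.
by rewrite [RHS]big_enum_val; apply: eq_bigr => j _; rewrite mxE.
Qed.

Lemma frob2_blocks (M : 'M[C]_d) N : (forall k, (blk k < N)%N) ->
  \sum_(b < N) frob2 (block M b) =
  \sum_k \sum_(l | blk k == blk l) `|M k l| ^+ 2.
Proof.
move=> blkN; rewrite [RHS](partition_big (fun k => Ordinal (blkN k)) xpredT) //=.
by apply: eq_bigr => b _; rewrite frob2_block.
Qed.

Lemma closest_block_triangular (A X Y : 'M[C]_d) :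
  (forall k l, blk k != blk l -> X k l = A k l) ->
  (forall b, closest_stable_nonneg (block A b) (block X b)) ->
  nonneg_mx Y -> stable_mx Y -> frob (X - A) <= frob (Y - A).
Proof.
move=> offX optX nY sY; pose N := (\max_k blk k).+1.
have blkN k : (blk k < N)%N by rewrite ltnS (leq_bigmax k).
rewrite frob_leE.
have -> : frob2 (X - A) = \sum_(b < N) frob2 (block (X - A) b).
  rewrite frob2_blocks //; apply: eq_bigr => k _.
  rewrite [LHS](bigID (fun l => blk k == blk l)) /=.
  rewrite [X in _ + X = _]big1 ?addr0 // => l /offX.
  by rewrite !mxE => ->; rewrite subrr normr0 expr0n.
apply: (@le_trans _ _ (\sum_(b < N) frob2 (block (Y - A) b))).
  apply: ler_sum => b _; have [_ _ opt] := optX b.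
  rewrite !blocksubB -frob_leE; apply: opt; last exact: stable_blocksub.
  by move=> i j; rewrite mxE.
rewrite frob2_blocks //; apply: ler_sum => k _.
rewrite [X in _ <= X](bigID (fun l => blk k == blk l)) /= lerDl.
by apply: sumr_ge0 => l _; apply: exprn_ge0.
Qed.

End BlockTriangular.

Theorem lemma2 (C : numClosedFieldType) (d : nat) (A : 'M[C]_d) (s : 'S_d)
  (blk : 'I_d -> nat) (Xt : 'M[C]_d) :
  nonneg_mx A ->
  (forall k l : 'I_d, (k <= l)%N -> (blk k <= blk l)%N) ->
  let At := perm_mx s *m A *m (perm_mx s)^T in
  (forall k l : 'I_d, (blk l < blk k)%N -> At k l = 0) ->
  (forall b : nat, closest_stable_nonneg (blocksub At (blockset blk b))
                                         (blocksub Xt (blockset blk b))) ->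
  (forall k l : 'I_d, (blk k < blk l)%N -> Xt k l = At k l) ->
  (forall k l : 'I_d, (blk l < blk k)%N -> Xt k l = 0) ->
  closest_stable_nonneg A ((perm_mx s)^T *m Xt *m perm_mx s).
Proof.
move=> nA _ At lowA optX upX lowX.
have AtE : At = perm_conj s A by rewrite /At tr_perm_mx.
have AE : A = perm_conj s^-1 At by rewrite AtE perm_conjK.
have offX k l : blk k != blk l -> Xt k l = At k l.
  by case: ltngtP => // [/upX|lt_lk] // _; rewrite lowX ?lowA.
have -> : (perm_mx s)^T *m Xt *m perm_mx s = perm_conj s^-1 Xt.
  by rewrite /perm_conj invgK tr_perm_mx.
split.
- apply/nonneg_perm_conj/(nonneg_block_entries (blk := blk)) => [b|k l /offX->].
    by case: (optX b).
  by rewrite AtE perm_conjE.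
- apply/stable_perm_conj/(stable_block_triangular lowX) => b.
  by case: (optX b).
- move=> Y nY sY; rewrite -[Y](perm_conjK s) {1 2}AE -!perm_conjB !frob_perm_conj.
  apply: closest_block_triangular offX optX _ _.
  - exact: nonneg_perm_conj.
  - exact: stable_perm_conj.
Qed.
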